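(* Let $u$ be a partition with $\omega(u)=n$, and suppose $\dot n=n-u_1-3u_3>0$. Then $v_2(\tau_u)\ge u_3+\lceil\frac{1}{2}\dot n\rceil-1$, except when $\dot n=7u_7$, in which case $v_2(\tau_u)\ge u_3+\lceil\frac12\dot n\rceil-3$.
   Context: A partition is a sequence $u=(u_1,u_2,\dots)$ of nonnegative integers, almost all zero ($u_i$ = number of parts equal to $i$); weight $\omega(u)=\sum_i iu_i$, degree $d(u)=\sum_i u_i$. For a partition $u$ of weight $n\ge1$ with degree $d$, $\gamma_u=\prod_{i\ge1}(i+1)^{u_i}u_i!$ and $\tau_u=(-1)^{d-1}\frac{(n+d-2)!}{\gamma_u}$. $v_2$ is the $2$-adic valuation and $\lceil x\rceil$ is the least integer $\ge x$. *)

From mathcomp Require Import all_boot all_order all_algebra.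
Set Implicit Arguments. Unset Strict Implicit. Unset Printing Implicit Defensive.
Import Order.TTheory GRing.Theory Num.Theory.

(* A partition u = (u_1, u_2, ...) is represented by a finite list
   s : seq nat with u_i = nth 0 s (i-1) (entries beyond the list are 0). *)
Definition part (s : seq nat) (i : nat) : nat := nth 0 s i.-1.

Definition weight (s : seq nat) : nat := \sum_(k < size s) k.+1 * nth 0 s k.

Definition degree (s : seq nat) : nat := \sum_(k < size s) nth 0 s k.

Definition gamma (s : seq nat) : nat :=
  \prod_(k < size s) (k.+2 ^ nth 0 s k * (nth 0 s k)`!).

Definition tau (s : seq nat) : rat :=
  ((-1) ^+ (degree s).-1 * ((weight s + degree s - 2)`!)%:R / (gamma s)%:R)%R.

Definition v2 (q : rat) : int :=
  ((logn 2 `|numq q|)%:Z - (logn 2 `|denq q|)%:Z)%R.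

From mathcomp Require Import all_boot all_order all_algebra.
From mathcomp Require Import zify.
Import Order.TTheory GRing.Theory Num.Theory.

(* By Legendre's formula v_2(m!) = m - s_2(m), with s_2 the binary digit sum.
   As n + d = sum_i (i+1) u_i, we have
     v_2(tau_u) = v_2((sum_i (i+1) u_i - 2)!) - sum_i v_2((i+1)^{u_i} u_i!),
   and superadditivity of v_2(m!) splits this into single parts: part i
   contributes v_2(((i+1) u_i)!) - v_2((i+1)^{u_i} u_i!), which is 0 for i = 1,
   u_3 for i = 3 and at least ceil(i u_i / 2) otherwise, because
   s_2(ab) <= s_2(a) s_2(b); these add up to u_3 + ceil(ndot / 2).  The -2 is
   charged to one part i outside {1, 3} with u_i > 0, where it costs at most 1,
   unless i = 7 is the only such part, where it costs 3. *)

Lemma binary_ind (P : nat -> Prop) :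
  P 0 -> (forall m, P m -> P m.*2.+1) -> (forall m, 0 < m -> P m -> P m.*2) ->
  forall m, P m.
Proof.
move=> P0 Podd Peven m; elim/ltn_ind: m => m IH.
have m_half := odd_double_half m.
rewrite -m_half; case: (odd m) m_half => /= m_half.
  by rewrite add1n; apply: Podd; apply: IH; lia.
rewrite add0n; have [half0|half_gt0] := posnP m./2; first by rewrite half0.
by apply: Peven => //; apply: IH; lia.
Qed.

Lemma logn2_double m : 0 < m -> logn 2 m.*2 = (logn 2 m).+1.
Proof. by move=> m_gt0; rewrite -mul2n lognM. Qed.

Lemma logn2_odd m : odd m -> logn 2 m = 0.
Proof. by move=> m_odd; apply: logn_coprime; rewrite coprime2n m_odd. Qed.

Lemma double_logn2_le m : 0 < m -> (logn 2 m).*2 + odd m <= m.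
Proof.
case: (boolP (odd m)) => [/logn2_odd -> | _ m_gt0] //.
rewrite addn0; apply: leq_trans (dvdn_leq m_gt0 (pfactor_dvdnn 2 m)).
by elim: (logn 2 m) => // k IH; rewrite expnS doubleS; case: k IH => // k; lia.
Qed.

Definition v2fact m := logn 2 m`!.

Lemma v2factS m : v2fact m.+1 = logn 2 m.+1 + v2fact m.
Proof. by rewrite /v2fact factS lognM ?fact_gt0. Qed.

Lemma v2fact_doubleS m : v2fact m.*2.+1 = v2fact m.*2.
Proof. by rewrite v2factS logn2_odd //= odd_double. Qed.

Lemma v2fact_double m : v2fact m.*2 = m + v2fact m.
Proof.
elim: m => // m IH.
by rewrite doubleS v2factS v2fact_doubleS -doubleS logn2_double // IH v2factS; lia.
Qed.

Lemma v2fact_le m : v2fact m <= m.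
Proof.
elim/binary_ind: m => // m IH; rewrite ?v2fact_doubleS v2fact_double; lia.
Qed.

Lemma leq_v2factD a b : v2fact a + v2fact b <= v2fact (a + b).
Proof.
have := bin_fact (leq_addr b a); rewrite addKn /v2fact => <-.
by rewrite !lognM ?muln_gt0 ?fact_gt0 ?bin_gt0 ?leq_addr //; lia.
Qed.

Lemma leq_v2fact_sum (I : finType) (P : pred I) (F : I -> nat) :
  \sum_(i | P i) v2fact (F i) <= v2fact (\sum_(i | P i) F i).
Proof.
apply: (big_rec2 (fun x y => x <= v2fact y)) => // i a b _ le_ab.
by apply: leq_trans (leq_v2factD _ _); rewrite leq_add2l.
Qed.

(* By Legendre's formula this is the sum of the binary digits of [m]. *)
Definition dsum2 m := m - v2fact m.

Lemma v2fact_dsum2 m : v2fact m + dsum2 m = m.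
Proof. by rewrite /dsum2; have := v2fact_le m; lia. Qed.

Lemma dsum2_double m : dsum2 m.*2 = dsum2 m.
Proof. by rewrite /dsum2 v2fact_double; have := v2fact_le m; lia. Qed.

Lemma dsum2_doubleS m : dsum2 m.*2.+1 = (dsum2 m).+1.
Proof. by rewrite /dsum2 v2fact_doubleS v2fact_double; have := v2fact_le m; lia. Qed.

Lemma dsum2_le m : dsum2 m <= m.
Proof. exact: leq_subr. Qed.

Lemma dsum2_gt0 m : 0 < m -> 0 < dsum2 m.
Proof.
elim/binary_ind: m => // m IH; first by rewrite dsum2_doubleS.
by rewrite dsum2_double double_gt0.
Qed.

Lemma leq_dsum2D a b : dsum2 (a + b) <= dsum2 a + dsum2 b.
Proof.
rewrite /dsum2; have := leq_v2factD a b; have := v2fact_le (a + b); lia.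
Qed.

Lemma leq_dsum2M a b : dsum2 (a * b) <= dsum2 a * dsum2 b.
Proof.
elim/binary_ind: b => [|b IH|b _ IH]; first by rewrite muln0.
  rewrite dsum2_doubleS mulnS -doubleMr addnC.
  apply: leq_trans (leq_dsum2D _ _) _.
  by rewrite dsum2_double mulnS addnC leq_add2l.
by rewrite -doubleMr !dsum2_double.
Qed.

Lemma dsum2_half m : (dsum2 m).*2 <= m.+1.
Proof.
elim/binary_ind: m => // m IH; last by rewrite dsum2_double; lia.
by rewrite dsum2_doubleS; have := dsum2_le m; lia.
Qed.

Lemma dsum2_pred m : 0 < m -> dsum2 m + logn 2 m = (dsum2 m.-1).+1.
Proof.
case: m => // m _; rewrite /dsum2 v2factS /=.
by have := v2fact_le m; have := v2fact_le m.+1; rewrite v2factS; lia.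
Qed.

Lemma logn_dsum2_le_pred m : 2 < m -> logn 2 m + dsum2 m <= m.-1.
Proof.
elim/binary_ind: m => // [k _ | k k_gt0 IH k_gt1].
  by rewrite logn2_odd /= ?odd_double //; have := dsum2_half k.*2.+1; lia.
rewrite logn2_double // dsum2_double.
have [k_le2|k_gt2] := leqP k 2; first by have -> : k = 2 by lia.
by have := IH k_gt2; lia.
Qed.

Lemma logn_dsum2_double_le m : 2 < m -> m != 4 ->
  (logn 2 m + dsum2 m).*2 + ~~ odd m <= m.+1.
Proof.
elim/binary_ind: m => // [k _ | k k_gt0 _ k_gt1 k_neq2].
  by rewrite logn2_odd /= ?odd_double //; have := dsum2_half k.*2.+1; lia.
rewrite logn2_double // dsum2_double odd_double.
by have := @logn_dsum2_le_pred k; lia.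
Qed.

Lemma logn_dsum2_double_le_pred m : 4 < m -> m != 6 -> m != 8 ->
  (logn 2 m + dsum2 m).*2 <= m.-1.
Proof.
elim/binary_ind: m => // [k _ k_gt1 | k k_gt0 _ k_gt2 k_neq3 k_neq4].
  rewrite logn2_odd /= ?odd_double // dsum2_doubleS.
  have [k_le2|k_gt2] := leqP k 2; first by have -> : k = 2 by lia.
  by have := @logn_dsum2_le_pred k; lia.
rewrite logn2_double // dsum2_double.
elim/binary_ind: k k_gt0 k_gt2 k_neq3 k_neq4 => // [l _ | l l_gt0 _] *.
  by rewrite logn2_odd /= ?odd_double // dsum2_doubleS; have := dsum2_le l; lia.
by rewrite logn2_double // dsum2_double; have := @logn_dsum2_le_pred l; lia.
Qed.

Lemma dsum2_logn_double_le_pred m : 2 < m -> m != 4 ->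
  dsum2 m + (logn 2 m).*2 <= m.-1.
Proof.
elim/binary_ind: m => // [k _ | k k_gt0 IH k_gt1 k_neq2].
  by rewrite logn2_odd /= ?odd_double //; have := dsum2_half k.*2.+1; lia.
rewrite logn2_double // dsum2_double.
have [->|k_neq4] := eqVneq k 4; first by [].
by have := IH; lia.
Qed.

Lemma logn_succ_dsum2_pred_le m : 1 < m -> m != 3 -> m != 7 ->
  (logn 2 m.+1).*2 + (dsum2 m.-1).*2 + odd m <= m.
Proof.
elim/binary_ind: m => // [k _ k_gt0 k_neq1 k_neq3 | k k_gt0 _ _ _ _].
  rewrite -doubleS logn2_double //= dsum2_double odd_double /=.
  have k1_gt2 : 2 < k.+1 by lia.
  have k1_neq4 : k.+1 != 4 by lia.
  have /= := dsum2_pred k.+1 (ltn0Sn k).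
  by have := dsum2_logn_double_le_pred k.+1 k1_gt2 k1_neq4; lia.
by rewrite logn2_odd /= ?odd_double //; have := dsum2_half k.*2.-1; lia.
Qed.

Lemma dsum2_small : [/\ dsum2 2 = 1, dsum2 4 = 1, dsum2 6 = 2 & dsum2 8 = 1].
Proof. by []. Qed.

Lemma leq_dsum2M_lin a b : 0 < a -> dsum2 (a * b) + b <= dsum2 a * b + dsum2 b.
Proof.
move=> a_gt0; have := leq_dsum2M a b; have := dsum2_le b.
have : 0 < dsum2 a by apply: dsum2_gt0.
case: (dsum2 a) => // k _ le_b; rewrite !mulSn.
by have := leq_mul (leqnn k) le_b; lia.
Qed.

Lemma leq_dsum2_mul_sub2 a b : 1 < a -> 0 < b ->
  dsum2 (a * b - 2) <= dsum2 a * dsum2 b.-1 + dsum2 (a - 2).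
Proof.
move=> a_gt1 b_gt0; have -> : a * b - 2 = a * b.-1 + (a - 2).
  by case: b b_gt0 => // b _; rewrite mulnS; lia.
by apply: leq_trans (leq_dsum2D _ _) _; rewrite leq_add2r leq_dsum2M.
Qed.

Definition v2gamma i x := x * logn 2 i.+1 + v2fact x.

Definition ndot_part i x := if (i == 1) || (i == 3) then 0 else i * x.

(* The share of part [i] in the lower bound u_3 + ceil(ndot / 2). *)
Definition credit i x := (i == 3) * x + uphalf (ndot_part i x).

Lemma credit_v2gamma_le i x : 0 < i -> credit i x + v2gamma i x <= v2fact (i.+1 * x).
Proof.
move=> i_gt0; rewrite /credit /v2gamma /ndot_part.
have [-> | i_neq1] := eqVneq i 1; first by rewrite muln1 mul2n v2fact_double.
have [-> | i_neq3] := eqVneq i 3.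
  have -> : 4 * x = x.*2.*2 by lia.
  by rewrite /= !v2fact_double (_ : logn 2 4 = 2) //; lia.
rewrite /= -leq_double doubleD uphalfK.
have i1_gt2 : 2 < i.+1 by lia.
have i1_neq4 : i.+1 != 4 by lia.
have := leq_mul (logn_dsum2_double_le i.+1 i1_gt2 i1_neq4) (leqnn x).
have := leq_dsum2M_lin i.+1 x isT.
have := v2fact_dsum2 x; have := v2fact_dsum2 (i.+1 * x).
have : odd (i * x) <= odd i * x.
  by rewrite oddM; case: (odd i); case: x => //= x; exact: leq_trans (leq_b1 _) _.
rewrite /= negbK; nia.
Qed.

Lemma credit_v2gamma_le_sub2 i x : 1 < i -> i != 3 -> i != 7 -> 0 < x ->
  credit i x + v2gamma i x <= (v2fact (i.+1 * x - 2)).+1.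
Proof.
move=> i_gt1 i_neq3 i_neq7 x_gt0; rewrite /credit /v2gamma /ndot_part.
rewrite (negPf i_neq3) (_ : i == 1 = false) /=; last by apply/eqP; lia.
have [-> | i_neq2] := eqVneq i 2.
  rewrite mul2n uphalf_double (_ : logn 2 3 = 0) // muln0.
  have [x_le1 | x_gt1] := leqP x 1; first by have -> : x = 1 by lia.
  have -> : 3 * x - 2 = x.*2 + (x - 2) by lia.
  by have := leq_v2factD x.*2 (x - 2); rewrite v2fact_double; lia.
rewrite -leq_double !doubleD uphalfK doubleS.
case: x x_gt0 => // m _.
have Lx := v2fact_dsum2 m.+1; have /= sx := dsum2_pred m.+1 isT.
have vx := double_logn2_le m.+1 isT; have sm := dsum2_le m.
have Ly := v2fact_dsum2 (i.+1 * m.+1 - 2).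
have /= sy := leq_dsum2_mul_sub2 i.+1 m.+1 (ltnW i_gt1) isT.
rewrite (_ : i.+1 - 2 = i.-1) in sy; last by lia.
have [i5 | i_neq5] := eqVneq i 5.
  subst i; move: sy; rewrite (_ : logn 2 6 = 1) // oddM /=.
  by case: dsum2_small => _ -> -> _; clear -Lx sx vx sm Ly; lia.
have i1_gt4 : 4 < i.+1 by lia.
have i1_neq6 : i.+1 != 6 by lia.
have i1_neq8 : i.+1 != 8 by lia.
have slope := logn_dsum2_double_le_pred i.+1 i1_gt4 i1_neq6 i1_neq8.
have base := logn_succ_dsum2_pred_le i i_gt1 i_neq3 i_neq7.
have par : odd (i * m.+1) <= odd i by rewrite oddM; case: (odd i); case: odd.
have slope_m := leq_mul slope (leqnn m).
have sg_gt0 := dsum2_gt0 i.+1 (ltn0Sn i).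
have sg_shift : dsum2 i.+1 * dsum2 m + m <= dsum2 m + dsum2 i.+1 * m.
  by move: sg_gt0 sm; clear; nia.
by clear -Lx sx vx sm Ly sy slope base par slope_m sg_shift; lia.
Qed.

Lemma credit_v2gamma_le_sub2_7 x : 0 < x ->
  credit 7 x + v2gamma 7 x <= v2fact (8 * x - 2) + 3.
Proof.
move=> x_gt0; rewrite /credit /v2gamma /ndot_part /= (_ : logn 2 8 = 3) //.
rewrite -leq_double !doubleD uphalfK oddM /=.
have := v2fact_dsum2 x; have /= := dsum2_pred x x_gt0.
have := double_logn2_le x x_gt0; have := dsum2_le x.-1.
have := v2fact_dsum2 (8 * x - 2).
have := leq_dsum2_mul_sub2 8 x isT x_gt0.
by case: dsum2_small => _ _ -> ->; lia.
Qed.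

Section V2.
Local Open Scope ring_scope.

Lemma v2N (q : rat) : v2 (- q) = v2 q.
Proof. by rewrite /v2 numqN denqN abszN. Qed.

Lemma v2_signed_ratio e (a b : nat) : (0 < a)%N -> (0 < b)%N ->
  v2 ((-1) ^+ e * a%:R / b%:R) = (logn 2 a)%:Z - (logn 2 b)%:Z.
Proof.
move=> a_gt0 b_gt0.
have -> : v2 ((-1) ^+ e * a%:R / b%:R) = v2 (a%:R / b%:R).
  by elim: e => [|e IH]; rewrite ?mul1r // exprS mulN1r !mulNr v2N.
set q : rat := a%:R / b%:R.
have q_neq0 : q != 0 by rewrite mulf_neq0 ?invr_eq0 ?pnatr_eq0 -?lt0n.
have numq_den : numq q * b = a%:Z * denq q.
  apply: (@intr_inj rat); rewrite !rmorphM /= -!pmulrn numqE mulrAC.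
  by rewrite mulfVK // pnatr_eq0 -lt0n.
have /(congr1 (logn 2)) : (`|numq q| * b = a * `|denq q|)%N.
  by have := congr1 absz numq_den; rewrite !abszM !absz_nat.
have num_gt0 : (0 < `|numq q|)%N by rewrite absz_gt0 numq_eq0.
have den_gt0 : (0 < `|denq q|)%N by rewrite absz_gt0 denq_neq0.
by rewrite !lognM // /v2 -/q; lia.
Qed.

End V2.

Definition psum (u : seq nat) (F : nat -> nat -> nat) : nat :=
  \sum_(k < size u) F k.+1 (nth 0 u k).

Lemma psum_pick u c : 0 < c -> psum u (fun i x => (i == c) * x) = part u c.
Proof.
case: c => // c _; rewrite /part /psum /=.
have [c_lt | c_ge] := ltnP c (size u); last first.
  rewrite nth_default // big1 // => k _; case: eqP => [[k_eq]|_] //.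
  by move: (ltn_ord k); rewrite k_eq ltnNge c_ge.
rewrite (bigD1 (Ordinal c_lt)) //= eqxx mul1n big1 ?addn0 // => k k_neq.
by case: eqP => [[k_eq]|_] //; case/eqP: k_neq; apply: val_inj.
Qed.

Lemma logn_gamma u : logn 2 (gamma u) = psum u v2gamma.
Proof.
have [<- _] : psum u v2gamma = logn 2 (gamma u) /\ 0 < gamma u.
  apply: (big_rec2 (fun s p => s = logn 2 p /\ 0 < p)) => // k s p _ [-> p_gt0].
  have pow_gt0 : 0 < k.+2 ^ nth 0 u k by rewrite expn_gt0.
  by rewrite !lognM ?muln_gt0 ?pow_gt0 ?fact_gt0 // lognX.
by [].
Qed.

Lemma v2_tau u :
  v2 (tau u) = ((v2fact (weight u + degree u - 2))%:Z - (psum u v2gamma)%:Z)%R.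
Proof.
rewrite /tau v2_signed_ratio ?fact_gt0 ?logn_gamma //.
by apply: prodn_gt0 => k; rewrite muln_gt0 expn_gt0 fact_gt0.
Qed.

Lemma psumD u F G : psum u (fun i x => F i x + G i x) = psum u F + psum u G.
Proof. exact: big_split. Qed.

Lemma weight_degree u : weight u + degree u = psum u (fun i x => i.+1 * x).
Proof. by rewrite -big_split; apply: eq_bigr => k _; rewrite /= mulSn addnC. Qed.

Lemma weight_split u : weight u = part u 1 + 3 * part u 3 + psum u ndot_part.
Proof.
rewrite -(psum_pick u 1) // -(psum_pick u 3) // /psum big_distrr -!big_split.
by apply: eq_bigr => -[[|[|[|k]]] k_lt] _; rewrite /ndot_part /=; lia.
Qed.

Lemma leq_uphalfD a b : uphalf (a + b) <= uphalf a + uphalf b.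
Proof.
by rewrite -leq_double doubleD !uphalfK oddD; case: (odd a); case: (odd b) => /=; lia.
Qed.

Lemma psum_credit u : part u 3 + uphalf (psum u ndot_part) <= psum u credit.
Proof.
rewrite psumD psum_pick // leq_add2l.
apply: (big_rec2 (fun s t => uphalf s <= t)) => // k s t _ le_st.
by apply: leq_trans (leq_uphalfD _ _) _; rewrite leq_add2l.
Qed.

Lemma psum_credit_v2gamma_le u i c : 0 < i -> 0 < part u i ->
  credit i (part u i) + v2gamma i (part u i) <= v2fact (i.+1 * part u i - 2) + c ->
  psum u credit + psum u v2gamma <= v2fact (weight u + degree u - 2) + c.
Proof.
case: i => // k _; rewrite /part /= => x_gt0 main_le.
have k_lt : k < size u by rewrite ltnNge; apply: contraTN x_gt0 => /(nth_default 0) ->.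
pose k0 := Ordinal k_lt.
rewrite weight_degree /psum -big_split (bigD1 k0) //.
rewrite (bigD1 k0 (F := fun j : 'I_(size u) => j.+2 * nth 0 u j)) //=.
set rest := \sum_(j < size u | j != k0) _.
set rest_val := \sum_(j < size u | j != k0) _.
have rest_le : rest <= v2fact rest_val.
  apply: leq_trans (leq_v2fact_sum _ _ _).
  by apply: leq_sum => j _; apply: credit_v2gamma_le.
have two_le : 2 <= k.+2 * nth 0 u k by rewrite -{1}(muln1 2) leq_mul.
have := leq_v2factD (k.+2 * nth 0 u k - 2) rest_val.
rewrite -addnBAC //; clear -main_le rest_le; lia.
Qed.

Lemma good_part_or_ndot7 u :
  (exists i, [/\ 1 < i, i != 3, i != 7 & 0 < part u i]) \/
  psum u ndot_part = 7 * part u 7.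
Proof.
case: (pickP (fun k : 'I_(size u) =>
  [&& 1 < k.+1, k.+1 != 3, k.+1 != 7 & 0 < nth 0 u k])) => [k | no_good].
  by case/and4P => *; left; exists k.+1.
right; rewrite -(psum_pick u 7) // /psum big_distrr; apply: eq_bigr => k _ /=.
have [-> | x_gt0] := posnP (nth 0 u k); first by rewrite /ndot_part !muln0; case: ifP.
move: (no_good k); rewrite x_gt0 andbT /ndot_part.
by case: k x_gt0 => -[|[|[|[|[|[|[|k]]]]]]] //= ? _ _; rewrite mul1n.
Qed.

Theorem lemma4p7 (u : seq nat) (n : nat) :
  weight u = n ->
  0 < n - part u 1 - 3 * part u 3 ->
  let ndot := n - part u 1 - 3 * part u 3 in
  (if ndot == 7 * part u 7 then
     ((part u 3)%:Z + (uphalf ndot)%:Z - 3 <= v2 (tau u))%R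
   else
     ((part u 3)%:Z + (uphalf ndot)%:Z - 1 <= v2 (tau u))%R).
Proof.
move=> <-; rewrite /= v2_tau.
have -> : weight u - part u 1 - 3 * part u 3 = psum u ndot_part.
  by rewrite weight_split; lia.
move=> ndot_gt0; have credit_ge := psum_credit u.
case: (good_part_or_ndot7 u) => [[i [i_gt1 i_neq3 i_neq7 x_gt0]] | ndot7].
  have := psum_credit_v2gamma_le u i 1 (ltnW i_gt1) x_gt0.
  rewrite addn1 => /(_ (credit_v2gamma_le_sub2 i _ i_gt1 i_neq3 i_neq7 x_gt0)).
  by case: ifP => _; lia.
have x7_gt0 : 0 < part u 7 by lia.
rewrite ndot7 eqxx.
have := psum_credit_v2gamma_le u 7 3 isT x7_gt0 (credit_v2gamma_le_sub2_7 _ x7_gt0).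
by rewrite -ndot7; lia.
Qed.
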